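(* Let $j\ge 1$, $\lambda\ge 1$, $s\ge 0$ be integers and let $w=w_{j,s,\lambda}$ be the leaf weight sequence defined in the context. Then for every integer $n>3+2s+\lambda j$ we have $1\le n-s-w(n-j)<n$ and \[ w(n)=w\bigl(n-s-w(n-j)\bigr)+\lambda j . \]
   Context: Fix integers $j\ge1$, $\lambda\ge1$, $s\ge0$. Define a labeled infinite rooted tree $\mathcal K$ as follows. It has ''supernodes'' $S_0,S_1,S_2,\dots$ with an edge between $S_i$ and $S_{i+1}$ for every $i\ge0$ ($S_0$ is the root). $S_0$ has two further children: the ''initial leaf'' and a node $N_0$, which is a leaf. For each $i\ge1$, $S_i$ has a child $N_i$ (the ''knot node''), and attached to $N_i$ are $\lambda$ chains, each a path of $i\cdot j$ nodes hanging from $N_i$; the last (bottom) node of each chain is a leaf. Each supernode carries $s$ labels and every other node carries exactly one label. The labels are the consecutive positive integers $1,2,3,\dots$, assigned in the following order: initial leaf, $S_0$, $N_0$; then for $i=1,2,3,\dots$: $S_i$ (its $s$ labels), $N_i$, then the nodes of the first chain of $N_i$ from top to bottom, then the second chain, ..., then the $\lambda$-th chain. The initial leaf has weight $1$; every other leaf of $\mathcal K$ (namely $N_0$ and the bottom node of each chain) has weight $j$. The leaf weight sequence $w(n)=w_{j,s,\lambda}(n)$ ($n\ge1$) is the total weight of the leaves of $\mathcal K$ whose label is $\le n$. Explicitly, $w(n)=1+j\cdot\#\{\ell\in L:\ell\le n\}$, where $L$ consists of the number $s+2$ together with the numbers $L_{i,c}=s+2+\sum_{l=1}^{i-1}(s+1+\lambda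 l j)+s+1+c\,i\,j$ for $i\ge1$, $1\le c\le\lambda$. *)

From mathcomp Require Import all_boot all_order all_algebra.
Set Implicit Arguments. Unset Strict Implicit. Unset Printing Implicit Defensive.

Definition Lic (j s lam i c : nat) : nat :=
  s + 2 + (\sum_(1 <= l < i) (s + 1 + lam * l * j)) + s + 1 + c * i * j.

(* L = {s+2} U {L_{i,c} : i>=1, 1<=c<=lam}.
   Since L_{i,c} >= i, only i <= n can contribute; the L_{i,c} are pairwise
   distinct (strictly increasing in (i,c) lexicographically) and all > s+2,
   so counting index pairs counts elements of L. *)
Definition cntL (j s lam n : nat) : nat :=
  (s + 2 <= n) +
  \sum_(1 <= i < n.+1) \sum_(1 <= c < lam.+1) (Lic j s lam i c <= n).

Definition w (j s lam n : nat) : nat := 1 + j * cntL j s lam n.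

From mathcomp Require Import all_boot all_order all_algebra.
From mathcomp Require Import zify.
Import Order.TTheory GRing.Theory Num.Theory.

Set Implicit Arguments.
Unset Strict Implicit.
Unset Printing Implicit Defensive.

(* After the labels of S_0 and N_0, the labels come in blocks: block i >= 1
   consists of S_i, N_i and the lam chains, has length s + 1 + lam i j, and the
   bottom of its c-th chain sits at offset s + 1 + c i j.  So at offset u of
   block i the weight is 1 + j (1 + lam (i - 1) + #{c <= lam | s + 1 + c i j <= u}).
   Let n lie at offset t of block i + 1 >= 2.  If t >= j and k chain bottoms of
   that block precede n - j, then n - s - w(n - j) lies at offset t - j (k + 1)
   of block i, and comparing the thresholds c i j there with c (i + 1) j at n
   shows that both points have passed equally many chain bottoms of their own
   block; the weights thus differ by the lam j of one full block.  If t < j, then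
   n - j lies in the last chain of block i and the target is offset t of block i,
   where, as at n, no chain bottom has been passed yet. *)

Lemma sum_leq_nat (lam q : nat) : \sum_(1 <= c < lam.+1) (c <= q) = minn lam q.
Proof.
elim: lam => [|lam IH]; first by rewrite big_geq // min0n.
by rewrite big_nat_recr //= IH; case: leqP; lia.
Qed.

Lemma leq_minn_div (lam c x d : nat) : 0 < d ->
  (c <= minn lam (x %/ d)) = (c <= lam) && (c * d <= x).
Proof. by move=> d_gt0; rewrite leq_min leq_divRL. Qed.

Lemma eq_minn_div (lam x y d e : nat) : 0 < d -> 0 < e ->
  (forall c, c <= lam -> (c * d <= x) = (c * e <= y)) ->
  minn lam (x %/ d) = minn lam (y %/ e).
Proof.
move=> d_gt0 e_gt0 eq_thr; apply/eqP; rewrite eqn_leq !leq_minn_div // !geq_minl /=.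
by rewrite eq_thr ?geq_minl // -eq_thr ?geq_minl // -!leq_divRL // !geq_minr.
Qed.

(* [d + j] plays the chain length (i + 1) j of a block and [d] the chain length
   i j of the previous block. *)
Section Staircase.

Variables lam d j x k : nat.
Hypotheses (j_gt0 : 0 < j) (j_le_d : j <= d).
Hypothesis leq_k : forall c, (c <= k) = (c <= lam) && (c * (d + j) <= x - j).

Let d_gt0 : 0 < d. Proof. exact: leq_trans j_le_d. Qed.

Let k_le_lam : k <= lam. Proof. by have := leq_k k; rewrite leqnn => /esym/andP[]. Qed.

Let k_step : k < lam -> x - j < k.+1 * (d + j).
Proof. by move=> k_lt; have := leq_k k.+1; rewrite ltnn k_lt /= => /esym/negbT; rewrite -ltnNge. Qed.

Lemma staircase_shift_le : 0 < k -> j * k.+1 <= x.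
Proof. move=> k_gt0; have := leq_k k; rewrite leqnn k_le_lam /=; nia. Qed.

Lemma staircase_shift_bound : x <= lam * (d + j) -> x - j * k.+1 <= lam * d.
Proof.
move=> x_le; have [k_lt|] := ltnP k lam; last first.
  move=> lam_le; have -> : k = lam by apply/eqP; rewrite eqn_leq k_le_lam.
  nia.
have step := k_step k_lt; have [k2_le|lam_le] := ltnP k.+1 lam.
  have : k.+2 * d <= lam * d by rewrite leq_mul2r k2_le orbT.
  nia.
have -> : lam = k.+1 by apply/eqP; rewrite eqn_leq k_lt lam_le.
nia.
Qed.

Lemma staircase_shift :
  minn lam ((x - j * k.+1) %/ d) = minn lam (x %/ (d + j)).
Proof.
symmetry; apply: eq_minn_div; rewrite ?addn_gt0 ?j_gt0 ?orbT // => c c_le.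
have [c_le_k|k_lt_c] := leqP c k.
  have := leq_k c; rewrite c_le_k c_le => /esym c_thr.
  have := leq_k k; rewrite leqnn k_le_lam => /esym k_thr.
  apply/idP/idP => _; nia.
have step := k_step (leq_trans k_lt_c c_le).
have [->|c_gt] := eqVneq c k.+1; first by rewrite mulnDr (mulnC j); lia.
have c2 : k.+2 <= c by rewrite ltn_neqAle eq_sym c_gt k_lt_c.
have cD : k.+2 * (d + j) <= c * (d + j) by rewrite leq_mul2r c2 orbT.
have cd : k.+2 * d <= c * d by rewrite leq_mul2r c2 orbT.
rewrite mulSn in cD cd.
have x_lt : x < c * (d + j) by move: step cD; clear; lia.
rewrite mulnDr in step.
have x_sub_lt : x - k.+1 * j < c * d by move: step cd j_gt0 j_le_d; clear; lia.
by rewrite (mulnC j) leqNgt x_lt leqNgt x_sub_lt.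
Qed.

End Staircase.

Lemma divn_mulB (lam d e : nat) : 0 < e <= d -> (lam * d - e) %/ d = lam.-1.
Proof.
case/andP=> e_gt0 e_le_d; have d_gt0 := leq_trans e_gt0 e_le_d.
case: lam => [|l]; first by rewrite mul0n sub0n div0n.
rewrite mulSnr -addnBA // divnMDl // divn_small ?addn0 //; lia.
Qed.

Section Blocks.

Variables j s lam : nat.

Definition block_len i := s + 1 + lam * i * j.

Definition block_start i := s + 2 + \sum_(1 <= l < i) block_len l.

Lemma block_startS i : 0 < i -> block_start i.+1 = block_start i + block_len i.
Proof. by move=> i_gt0; rewrite /block_start big_nat_recr //= addnA. Qed.

Lemma leq_block_start : {homo block_start : a b / a <= b}.
Proof.
apply: (homo_leq leqnn (fun _ _ _ => @leq_trans _ _ _)) => -[//|i].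
by rewrite [block_start i.+2]block_startS // leq_addr.
Qed.

Lemma block_start_ge i : i + s.+1 <= block_start i.
Proof.
elim: i => [|i IH]; first by rewrite /block_start big_geq //; lia.
case: i IH => [|i] IH; first by rewrite /block_start big_geq //; lia.
by rewrite block_startS //; move: IH; rewrite /block_len; lia.
Qed.

Lemma LicE i c : Lic j s lam i c = block_start i + (s + 1 + c * i * j).
Proof. by rewrite /Lic /block_start /block_len; lia. Qed.

Lemma Lic_le_block_startS i c : 0 < i -> c <= lam -> Lic j s lam i c <= block_start i.+1.
Proof.
move=> i_gt0 c_le; rewrite LicE block_startS // leq_add2l leq_add2l.
by rewrite leq_mul2r leq_mul2r c_le !orbT.
Qed.

Lemma block_start_lt_Lic i c : block_start i < Lic j s lam i c.
Proof. by rewrite LicE; lia. Qed.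

Lemma cntL_block i u : 0 < j -> 0 < i -> u <= block_len i ->
  cntL j s lam (block_start i + u) = 1 + lam * i.-1 + minn lam ((u - s.+1) %/ (i * j)).
Proof.
move=> j_gt0 i_gt0 u_le; set x := block_start i + u.
have start_le_x : block_start i <= x by apply: leq_addr.
have x_le_next : x <= block_start i.+1 by rewrite block_startS // leq_add2l.
have i_le_x : i <= x by move: (block_start_ge i); lia.
rewrite /cntL (_ : s + 2 <= x); last by move: (block_start_ge i); lia.
rewrite (big_cat_nat (n := i)) //=; last exact: leqW.
rewrite (big_cat_nat (m := i) (n := i.+1)) //= big_nat1.
have -> : \sum_(1 <= i' < i) \sum_(1 <= c < lam.+1) (Lic j s lam i' c <= x) = i.-1 * lam.
  rewrite -subn1 -sum_nat_const_nat; apply: eq_big_nat => i' /andP[i'_gt0 i'_lt].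
  rewrite (eq_big_nat _ _ (F2 := fun=> 1)) ?sum_nat_const_nat ?subn1 ?muln1 //.
  move=> c /andP[_ c_le].
  apply/eqP; rewrite eqb1; apply: leq_trans (Lic_le_block_startS i'_gt0 c_le) _.
  exact: leq_trans (leq_block_start i'_lt) start_le_x.
have -> : \sum_(i.+1 <= i' < x.+1) \sum_(1 <= c < lam.+1) (Lic j s lam i' c <= x) = 0.
  rewrite big1_seq // => i' /andP[_]; rewrite mem_iota => /andP[i_lt _].
  rewrite big1_seq // => c _; apply/eqP; rewrite eqb0 -ltnNge.
  exact: leq_ltn_trans (leq_trans x_le_next (leq_block_start i_lt)) (block_start_lt_Lic _ _).
rewrite addn0 addnA (mulnC _ lam) -sum_leq_nat; congr (_ + _).
apply: eq_big_nat => c /andP[c_gt0 _]; rewrite LicE leq_add2l leq_divRL ?muln_gt0 ?i_gt0 //.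
have : 0 < c * (i * j) by rewrite !muln_gt0 c_gt0 i_gt0.
by rewrite mulnA; lia.
Qed.

Definition w_recurrence_at n :=
  s + w j s lam (n - j) < n /\
  w j s lam n = w j s lam (n - (s + w j s lam (n - j))) + lam * j.

Lemma w_recurrence_same_block i t : 0 < j -> 0 < i -> j <= t <= block_len i.+1 ->
  w_recurrence_at (block_start i.+1 + t).
Proof.
move=> j_gt0 i_gt0 /andP[j_le_t t_le].
have ij_gt0 : 0 < i * j by rewrite muln_gt0 i_gt0.
set x := t - s.+1; set k := minn lam ((x - j) %/ (i * j + j)).
have leq_k c : (c <= k) = (c <= lam) && (c * (i * j + j) <= x - j).
  by rewrite leq_minn_div // addn_gt0 j_gt0 orbT.
have j_le_ij : j <= i * j by rewrite leq_pmull.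
have jk_le_t : j * k.+1 <= t.
  have [->|k_gt0] := posnP k; first by rewrite muln1.
  exact: leq_trans (staircase_shift_le j_gt0 j_le_ij leq_k k_gt0) (leq_subr _ _).
have x_le : x <= lam * (i * j + j).
  by move: t_le; rewrite /x /block_len -mulnA mulSnr; lia.
have jk_bound := staircase_shift_bound j_gt0 j_le_ij leq_k x_le.
have n_j : block_start i.+1 + t - j = block_start i.+1 + (t - j).
  by rewrite addnBA.
have cnt_n_j : cntL j s lam (block_start i.+1 + (t - j)) = 1 + lam * i + k.
  rewrite cntL_block // ?(leq_trans (leq_subr _ _) t_le) //.
  by rewrite mulSnr subnAC.
have m_eq : block_start i.+1 + t - (s + w j s lam (block_start i.+1 + t - j))
    = block_start i + (t - j * k.+1).
  rewrite n_j /w cnt_n_j block_startS // /block_len.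
  move: jk_le_t; rewrite !mulnDr muln1 (mulnC j (lam * i)) mulnS; lia.
rewrite /w_recurrence_at m_eq; split.
  move: m_eq (block_start_ge i); lia.
rewrite /w !cntL_block //; last by move: jk_bound; rewrite /x /block_len -mulnA; lia.
rewrite -subnAC -/x staircase_shift // mulSnr -/k.
rewrite -[in lam * i](prednK i_gt0) mulnS; lia.
Qed.

Lemma w_recurrence_block_boundary i t : 0 < j -> 0 < lam -> 0 < i -> t < j ->
  w_recurrence_at (block_start i.+1 + t).
Proof.
move=> j_gt0 lam_gt0 i_gt0 t_lt_j.
have j_le_ij : j <= i * j by rewrite leq_pmull.
have j_le_len : j <= block_len i.
  by rewrite /block_len; apply: leq_trans (leq_addl _ _); rewrite leq_pmull ?muln_gt0 ?lam_gt0.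
have n_j : block_start i.+1 + t - j = block_start i + (block_len i + t - j).
  rewrite block_startS // -addnA addnBA //; exact: leq_trans j_le_len (leq_addr _ _).
have cnt_n_j : cntL j s lam (block_start i + (block_len i + t - j)) = lam * i.
  rewrite cntL_block //; last by lia.
  have -> : block_len i + t - j - s.+1 = lam * (i * j) - (j - t).
    by rewrite /block_len -mulnA; lia.
  rewrite divn_mulB ?subn_gt0 ?t_lt_j ?(leq_trans (leq_subr _ _) j_le_ij) //.
  rewrite (minn_idPr (leq_pred _)) -[in RHS](prednK i_gt0) mulnS; lia.
have m_eq : block_start i.+1 + t - (s + w j s lam (block_start i.+1 + t - j))
    = block_start i + t.
  by rewrite n_j /w cnt_n_j block_startS // /block_len (mulnC j (lam * i)); lia.
have t_lt_ij : t - s.+1 < i * j by apply: leq_ltn_trans (leq_subr _ _) (leq_trans t_lt_j _).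
rewrite /w_recurrence_at m_eq; split.
  by move: m_eq (block_start_ge i); lia.
have t_le_len : t <= block_len i := ltnW (leq_trans t_lt_j j_le_len).
have len_le : block_len i <= block_len i.+1.
  by rewrite /block_len leq_add2l leq_mul2r leq_mul2l leqnSn !orbT.
rewrite /w !cntL_block // ?(leq_trans t_le_len len_le) //.
rewrite !divn_small ?mulSnr ?ltn_addr // !minn0 -[in lam * i](prednK i_gt0) mulnS; lia.
Qed.

Lemma block_decomp n : block_start 2 < n ->
  exists i t, [/\ 0 < i, t <= block_len i.+1 & n = block_start i.+1 + t].
Proof.
move=> n_gt.
have bounded i : block_start i.+1 < n -> i <= n.
  move=> lt_n; apply: leq_trans (ltnW lt_n).
  exact: leq_trans (leqnSn i) (leq_trans (leq_addr _ _) (block_start_ge i.+1)).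
have [p Pp p_max] := ex_maxnP (ex_intro (fun i => block_start i.+1 < n) 1 n_gt) bounded.
have n_le : n <= block_start p.+1 + block_len p.+1.
  by rewrite -block_startS // leqNgt; apply/negP => /p_max; rewrite ltnn.
exists p, (n - block_start p.+1); split.
- exact: p_max 1 n_gt.
- by rewrite leq_subLR.
- by rewrite subnKC // ltnW.
Qed.

End Blocks.

Lemma w_recurrence (j s lam n : nat) : 0 < j -> 0 < lam -> 3 + 2 * s + lam * j < n ->
  w_recurrence_at j s lam n.
Proof.
move=> j_gt0 lam_gt0 n_gt.
have start2_lt : block_start j s lam 2 < n.
  by rewrite /block_start big_nat1 /block_len; lia.
have [i [t [i_gt0 t_le ->]]] := block_decomp start2_lt.
have [t_lt_j|j_le_t] := ltnP t j.
  exact: w_recurrence_block_boundary.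
by apply: w_recurrence_same_block; rewrite ?j_le_t.
Qed.

Local Open Scope ring_scope.

Theorem mainTheorem1 (j lam s n : nat) :
  (1 <= j)%N -> (1 <= lam)%N -> (3 + 2 * s + lam * j < n)%N ->
  let m : int := n%:Z - s%:Z - (w j s lam (n - j))%:Z in
  (1 <= m) /\ (m < n%:Z) /\
  (w j s lam n)%:Z = (w j s lam `|m|%N)%:Z + (lam * j)%:Z.
Proof.
move=> j_gt0 lam_gt0 n_gt /=.
have [w_lt w_eq] := w_recurrence j_gt0 lam_gt0 n_gt.
have w_gt0 : (0 < w j s lam (n - j))%N by rewrite /w addnC addn1.
have -> : n%:Z - s%:Z - (w j s lam (n - j))%:Z = (n - (s + w j s lam (n - j)))%N.
  by rewrite -addrA -opprD -PoszD subzn // ltnW.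
by rewrite absz_nat w_eq PoszD lez_nat ltz_nat; split; lia.
Qed.
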